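(* Let $G$ be a finite simple graph. If $x$ is a maximum cost construction sequence for $G$ (i.e. $\nu(x)=\nu^*(G)$), then $x$ is easy.
   Context: For a finite simple graph $G=(V,E)$ with $\ell=|V|+|E|$, a construction sequence (c-sequence) is a bijection $x:\{1,\dots,\ell\}\to V\sqcup E$ such that every edge $e=uw$ satisfies $x^{-1}(e)>\max\{x^{-1}(u),x^{-1}(w)\}$. The cost of $x$ is $\nu(x)=\sum_{e=uw\in E}\big(2x^{-1}(e)-x^{-1}(u)-x^{-1}(w)\big)$, and $\nu^*(G)$ is the maximum of $\nu(x)$ over all c-sequences for $G$. A c-sequence is easy if no edge precedes a vertex. *)

From HB Require Import structures.
From mathcomp Require Import all_boot all_order all_algebra.
Set Implicit Arguments. Unset Strict Implicit. Unset Printing Implicit Defensive.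
Import GRing.Theory Num.Theory.

Section CSeq.
Variables (T : finType) (g : rel T).

Definition simple_graph := symmetric g /\ irreflexive g.

Definition is_edge (A : {set T}) : bool :=
  [exists u, exists w, g u w && (A == [set u; w])].

Definition edge := {A : {set T} | is_edge A}.

Definition item := (T + edge)%type.

Definition ell := #|{: item}|.

(* a sequence x : {1..ell} -> V ⊔ E, indexed here by 'I_ell (index i stands
   for position i+1) *)
Definition seqT := 'I_ell -> item.

(* position x^{-1}(a) in {1,...,ell} (1-based), for bijective x *)
Definition pos (x : seqT) (a : item) : nat :=
  (find (fun i : 'I_ell => x i == a) (enum 'I_ell)).+1.

Definition cseq (x : seqT) : Prop :=
  bijective x /\
  forall (e : edge) (v : T), v \in val e -> pos x (inl v) < pos x (inr e).

Definition cost (x : seqT) : int :=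
  \sum_(e : edge)
     ((2 * pos x (inr e))%:Z - \sum_(v in val e) (pos x (inl v))%:Z)%R.

Definition max_cost (x : seqT) : Prop :=
  cseq x /\ forall y : seqT, cseq y -> (cost y <= cost x)%R.

Definition easy (x : seqT) : Prop :=
  forall (v : T) (e : edge), pos x (inl v) < pos x (inr e).

End CSeq.

From mathcomp Require Import all_boot all_order all_algebra.
From mathcomp Require Import fingroup perm.
Import Order.TTheory GRing.Theory Num.Theory.

Set Implicit Arguments.
Unset Strict Implicit.

(* If some edge precedes some vertex in x, then somewhere an edge is
   immediately followed by a vertex.  Swapping these two entries only moves
   edges later and vertices earlier, so every edge still follows its
   endpoints, and the cost grows (by at least 2, from the moved edge).  Hence
   a maximum-cost sequence is easy. *)

Lemma nat_flip (P : pred nat) a b : a <= b -> P a -> ~~ P b ->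
  exists2 i, a <= i < b & P i && ~~ P i.+1.
Proof.
elim: b => [|b IHb] ab Pa nPb.
  by move: ab; rewrite leqn0 => /eqP a0; rewrite -a0 Pa in nPb.
have ab' : a <= b.
  by move: ab; rewrite leq_eqVlt => /orP[/eqP aE|//]; rewrite -aE Pa in nPb.
case: (boolP (P b)) => Pb; first by exists b; [rewrite ab' /= | rewrite Pb].
have [i /andP[ai ib] Pi] := IHb ab' Pa Pb.
by exists i; rewrite // ai ltnW.
Qed.

Lemma ord_flip n (P : pred 'I_n) (i j : 'I_n) : i <= j -> P i -> ~~ P j ->
  exists k : 'I_n, exists2 k' : 'I_n, val k' = k.+1 & P k && ~~ P k'.
Proof.
move=> ij Pi nPj.
have := @nat_flip (fun m => P (insubd i m)) _ _ ij; rewrite !valKd.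
case/(_ Pi nPj) => m /andP[_ mj] /andP[Pm nPm].
have m1n : m.+1 < n := leq_ltn_trans mj (ltn_ord j).
have insubdE (l : 'I_n) : insubd i l = l by rewrite valKd.
exists (Ordinal (ltnW m1n)), (Ordinal m1n) => //.
by rewrite -(insubdE (Ordinal _)) -(insubdE (Ordinal m1n)) Pm.
Qed.

Section Positions.
Variables (T : finType) (g : rel T).

Lemma pos_app (x : seqT g) k : injective x -> pos x (x k) = k.+1.
Proof.
move=> xinj; rewrite /pos -/(index k _) -index_enum_ord; congr _.+1.
by apply: eq_find => j /=; rewrite (inj_eq xinj).
Qed.

Lemma pos_perm (x : seqT g) (s : {perm 'I_(ell g)}) k :
  injective x -> pos (x \o s) (x k) = (s^-1%g k).+1.
Proof.
move=> xinj; rewrite -{1}(permKV s k) (@pos_app (x \o s)) //.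
exact: inj_comp xinj (@perm_inj _ s).
Qed.

Lemma cseq_shift (x y : seqT g) : cseq x -> bijective y ->
  (forall e, pos x (inr e) <= pos y (inr e)) ->
  (forall v, pos y (inl v) <= pos x (inl v)) -> cseq y.
Proof.
move=> [_ xcseq] ybij edge_later vertex_earlier; split=> // e v ve.
by apply: leq_ltn_trans (vertex_earlier v) (leq_trans (xcseq e v ve) _).
Qed.

Lemma cost_lt_shift (x y : seqT g) e0 :
  (forall e, pos x (inr e) <= pos y (inr e)) ->
  pos x (inr e0) < pos y (inr e0) ->
  (forall v, pos y (inl v) <= pos x (inl v)) ->
  (cost x < cost y)%R.
Proof.
move=> edge_later e0_later vertex_earlier.
rewrite /cost (bigD1 e0) //= [X in (_ < X)%R](bigD1 e0) //=.
have vsum_ge (A : {set T}) :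
    (\sum_(v in A) (pos y (inl v))%:Z <= \sum_(v in A) (pos x (inl v))%:Z)%R.
  by apply: ler_sum => v _; rewrite lez_nat.
apply: ltr_leD; first by apply: ltr_leB; [rewrite ltz_nat ltn_pmul2l | apply: vsum_ge].
apply: ler_sum => e _; apply: lerB; last exact: vsum_ge.
by rewrite lez_nat leq_mul2l edge_later orbT.
Qed.

Section AdjacentSwap.
Variables (x : seqT g) (k k' : 'I_(ell g)) (e0 : edge g) (v0 : T).
Hypotheses (xbij : bijective x) (kk' : val k' = k.+1).
Hypotheses (xk : x k = inr e0) (xk' : x k' = inl v0).

Local Notation y := (x \o tperm k k' : seqT g).

Let pos_swap (a : item g) : exists j : 'I_(ell g),
  [/\ x j = a, pos x a = j.+1 & pos y a = (tperm k k' j).+1].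
Proof.
have [xi _ xiK] := xbij; have xinj := bij_inj xbij.
exists (xi a); split; first exact: xiK.
  by rewrite -{1}(xiK a) pos_app.
by rewrite -{1}(xiK a) pos_perm // tpermV.
Qed.

Lemma swap_edge_later e : pos x (inr e) <= pos y (inr e).
Proof.
have [j [xj -> ->]] := pos_swap (inr e); rewrite ltnS.
by case: tpermP => [->|jk'|//]; [rewrite kk' | rewrite jk' xk' in xj].
Qed.

Lemma swap_vertex_earlier v : pos y (inl v) <= pos x (inl v).
Proof.
have [j [xj -> ->]] := pos_swap (inl v); rewrite ltnS.
by case: tpermP => [jk|->|//]; [rewrite jk xk in xj | rewrite kk'].
Qed.

Lemma cseq_swap : cseq x -> cseq y.
Proof.
move=> xcseq; apply: cseq_shift xcseq _ swap_edge_later swap_vertex_earlier.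
by apply: bij_comp xbij _; exists (tperm k k'); apply: tpermK.
Qed.

Lemma cost_swap_gt : (cost x < cost y)%R.
Proof.
apply: (cost_lt_shift (e0 := e0) swap_edge_later _ swap_vertex_earlier).
have [j [xj -> ->]] := pos_swap (inr e0).
have -> : j = k by apply: (bij_inj xbij); rewrite xj xk.
by rewrite tpermL kk'.
Qed.

End AdjacentSwap.
End Positions.

Theorem lemma2 (T : finType) (g : rel T) (x : seqT g) :
  simple_graph g -> max_cost x -> easy x.
Proof.
move=> _ [xcseq xmax] v e; rewrite ltnNge; apply/negP => edge_first.
have [xbij _] := xcseq; have [xi _ xiK] := xbij.
have posE a : pos x a = (xi a).+1.
  by rewrite -{1}(xiK a) pos_app //; apply: bij_inj xbij.
pose is_edge_at j := if x j is inr _ then true else false.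
have [|||k [k' kk' /andP[]]] := @ord_flip _ is_edge_at (xi (inr e)) (xi (inl v)).
- by rewrite -ltnS -!posE.
- by rewrite /is_edge_at xiK.
- by rewrite /is_edge_at xiK.
rewrite /is_edge_at; case xk: (x k) => [//|e0] _; case xk': (x k') => [v0|//] _.
have := xmax _ (cseq_swap xbij kk' xk xk' xcseq).
by rewrite leNgt (cost_swap_gt xbij kk' xk xk').
Qed.
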